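(* Let $\mathcal{M}$ be a matroid on $[n]$, let $\gamma$ be a basic $\ell$-cover of $\mathcal{M}$, and let $H$ be an independent set of $\mathcal{M}(\gamma)$ with $H\subseteq\operatorname{supp}\gamma$ and $\gamma(H)=\ell$. Then: (1) $\mathcal{M}(\gamma)/H=\mathcal{M}(\gamma)^0$, i.e. a set $I\subseteq[n]-H$ satisfies $I\cup H\in\mathcal{M}(\gamma)$ if and only if $I$ is independent in $\mathcal{M}(\gamma)|_{[n]-\operatorname{supp}\gamma}$; (2) if moreover $\gamma(i)\le 1$ for all $i\in[n]$, then $\mathcal{M}(\gamma)|_{[n]-\operatorname{supp}\gamma}=\mathcal{M}|_{[n]-\operatorname{supp}\gamma}$.
   Context: Matroids are identified with their independence complexes. For $\gamma:[n]\to\mathbb{N}_0$ and $S\subseteq[n]$, $\gamma(S)=\sum_{i\in S}\gamma(i)$, $\operatorname{supp}\gamma=\{i:\gamma(i)>0\}$. $\gamma$ is an $\ell$-cover of $\mathcal{M}$ if $\gamma(F)\ge\ell$ for every basis $F$, basic if minimal among $\ell$-covers in the pointwise order. $\mathcal{M}(\gamma)$ is the matroid (complex) generated by the bases $F$ of $\mathcal{M}$ with $\gamma(F)=\ell$, and $\mathcal{M}(\gamma)^0:=\mathcal{M}(\gamma)|_{[n]-\operatorname{supp}\gamma}$. $\mathcal{M}|_A$ denotes restriction and $\mathcal{M}/H$ contraction (independent sets $I\subseteq [n]-H$ with $I\cup H$ independent). *)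

(* Matroids on [n] = 'I_n, identified with their
   independence complexes (a set of subsets of 'I_n). *)
From mathcomp Require Import all_boot.
Set Implicit Arguments. Unset Strict Implicit. Unset Printing Implicit Defensive.

Section MatroidDefs.
Variable n : nat.
Local Notation T := 'I_n.

Definition is_matroid (M : {set {set T}}) : Prop :=
  [/\ set0 \in M,
      (forall I J : {set T}, J \in M -> I \subset J -> I \in M) &
      (forall I J : {set T}, I \in M -> J \in M -> #|I| < #|J| ->
         exists2 x, x \in J :\: I & x |: I \in M)].

Definition is_basis (M : {set {set T}}) (F : {set T}) : Prop :=
  F \in M /\ (forall J : {set T}, J \in M -> F \subset J -> J = F).

Definition gsum (g : T -> nat) (S : {set T}) : nat := \sum_(i in S) g i.

Definition supp (g : T -> nat) : {set T} := [set i | 0 < g i].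

Definition is_cover (M : {set {set T}}) (l : nat) (g : T -> nat) : Prop :=
  forall F, is_basis M F -> l <= gsum g F.

Definition is_basic_cover (M : {set {set T}}) (l : nat) (g : T -> nat) : Prop :=
  is_cover M l g /\
  (forall g' : T -> nat, is_cover M l g' -> (forall i, g' i <= g i) ->
     forall i, g' i = g i).

(* M(gamma): complex generated by the bases F with gamma(F) = l *)
Definition Mgamma (M : {set {set T}}) (l : nat) (g : T -> nat) : {set {set T}} :=
  [set I : {set T} | [exists F : {set T},
     [&& [forall J : {set T}, (J \in M) ==> (F \subset J) ==> (J == F)],
         F \in M, gsum g F == l & I \subset F]]].

Definition restrict (M : {set {set T}}) (A : {set T}) : {set {set T}} :=
  [set I in M | I \subset A].

Definition contract (M : {set {set T}}) (H : {set T}) : {set {set T}} :=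
  [set I : {set T} | (I \subset ~: H) && (I :|: H \in M)].

End MatroidDefs.

(* An independent set I on which gamma vanishes extends, inside I :|: F, to a
   basis J, where F is a basis with gamma(F) = l containing H.  As gamma vanishes
   on I, gamma(J) <= gamma(F) = l, so J is again gamma-minimal; and J contains H,
   since dropping any h in H with gamma(h) > 0 would push gamma(J) below l.
   Conversely, if I :|: H lies in such a basis then gamma(I) + gamma(H) <= l =
   gamma(H) forces gamma to vanish on I. *)
From mathcomp Require Import all_boot.
Set Implicit Arguments. Unset Strict Implicit. Unset Printing Implicit Defensive.

Section WeightSums.
Variables (n : nat) (g : 'I_n -> nat).
Implicit Types A B : {set 'I_n}.

Lemma gsumS A B : A \subset B -> gsum g A <= gsum g B.
Proof.
move=> sAB; rewrite /gsum [X in _ <= X](big_setID A) /= (setIidPr sAB).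
exact: leq_addr.
Qed.

Lemma gsumU_disjoint A B : [disjoint A & B] ->
  gsum g (A :|: B) = gsum g A + gsum g B.
Proof.
move=> dAB; rewrite /gsum (big_setID A) /= setIUl setIid (setUidPl (subsetIr B A)).
by rewrite setDUl setDv set0U (setDidPl _) // disjoint_sym.
Qed.

Lemma gsum_eq0 A : (gsum g A == 0) = (A \subset ~: supp g).
Proof.
rewrite /gsum sum_nat_eq0.
by apply/forall_inP/subsetP => zA i /zA; rewrite in_setC inE lt0n negbK.
Qed.

Lemma gsumU_zero A B : A \subset ~: supp g -> gsum g (A :|: B) = gsum g B.
Proof.
move=> zA; rewrite /gsum (big_setID B) /= (setIidPr (subsetUr A B)) -!/(gsum g _).
have /eqP -> : gsum g ((A :|: B) :\: B) == 0.
  by rewrite gsum_eq0 (subset_trans _ zA) // setDUl setDv setU0 subsetDl.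
exact: addn0.
Qed.

Lemma gsumD1_lt A h : h \in A -> h \in supp g -> gsum g (A :\ h) < gsum g A.
Proof.
rewrite inE => hA gh_gt0.
by rewrite /gsum [in X in _ < X](big_setD1 h hA) /= -addn1 addnC leq_add2r.
Qed.

End WeightSums.

Section Minors.
Variables (n : nat) (M : {set {set 'I_n}}).
Implicit Types A H I : {set 'I_n}.

Lemma in_restrict A I : (I \in restrict M A) = (I \in M) && (I \subset A).
Proof. by rewrite inE. Qed.

Lemma in_contract H I : (I \in contract M H) = (I \subset ~: H) && (I :|: H \in M).
Proof. by rewrite inE. Qed.

End Minors.

Section MatroidBases.
Variables (n : nat) (M : {set {set 'I_n}}).
Hypothesis M_matroid : is_matroid M.
Implicit Types F I J : {set 'I_n}.

Lemma is_basis_card F J : is_basis M F -> J \in M -> #|F| <= #|J| -> is_basis M J.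
Proof.
case: M_matroid => _ _ augment [FM Fmax] JM leFJ; split=> // J' J'M sJJ'.
apply/eqP; rewrite eq_sym eqEcard sJJ' /= leqNgt; apply/negP => ltJJ'.
have [x /setDP[_ xF] xFM] := augment _ _ FM J'M (leq_ltn_trans leFJ ltJJ').
have /setP/(_ x) := Fmax _ xFM (subsetUr _ _).
by rewrite in_setU1 eqxx (negbTE xF).
Qed.

Lemma basis_extend_within F I : is_basis M F -> I \in M ->
  exists J, [/\ is_basis M J, I \subset J & J \subset I :|: F].
Proof.
case: M_matroid => _ _ augment Fbasis IM.
pose between J := [&& J \in M, I \subset J & J \subset I :|: F].
have between_I : between I by rewrite /between IM subxx subsetUl.
have [J /and3P[JM sIJ sJIF] Jmax] := arg_maxnP (fun J => #|J|) between_I.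
exists J; split=> //; apply: (is_basis_card Fbasis JM).
rewrite leqNgt; apply/negP => ltJF.
have [x /setDP[xF xJ] xJM] := augment _ _ JM Fbasis.1 ltJF.
have : #|x |: J| <= #|J|.
  apply: Jmax; rewrite /between xJM (subset_trans sIJ (subsetUr _ _)) /=.
  by rewrite subUset sub1set inE xF orbT sJIF.
by rewrite cardsU1 xJ ltnn.
Qed.

End MatroidBases.

Section GammaMinimalBases.
Variables (n : nat) (M : {set {set 'I_n}}) (l : nat) (g : 'I_n -> nat).
Implicit Types F H I J : {set 'I_n}.

Lemma MgammaP I :
  reflect (exists F, [/\ is_basis M F, gsum g F = l & I \subset F])
          (I \in Mgamma M l g).
Proof.
rewrite inE; apply: (iffP existsP) => [[F /and4P[/forallP Fmax FM /eqP gF sIF]]|].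
  exists F; split=> //; split=> // J JM sFJ.
  by apply/eqP; move/implyP/(_ JM)/implyP/(_ sFJ): (Fmax J).
case=> F [[FM Fmax] gF sIF]; exists F; apply/and4P; split=> //; last exact/eqP.
apply/forallP => J; apply/implyP => JM; apply/implyP => sFJ.
by rewrite (Fmax J JM sFJ).
Qed.

Lemma Mgamma_downward I J : J \in Mgamma M l g -> I \subset J -> I \in Mgamma M l g.
Proof.
move=> /MgammaP[F [Fbasis gF sJF]] sIJ; apply/MgammaP.
by exists F; split=> //; apply: subset_trans sIJ sJF.
Qed.

Lemma Mgamma_sub I : is_matroid M -> I \in Mgamma M l g -> I \in M.
Proof. by case=> _ M_downward _ /MgammaP[F [[FM _] _ sIF]]; apply: M_downward FM sIF. Qed.

Lemma zeroset_of_Mgamma_setU H I : gsum g H = l -> [disjoint I & H] ->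
  I :|: H \in Mgamma M l g -> I \subset ~: supp g.
Proof.
move=> gH dIH /MgammaP[F [_ gF sIHF]]; rewrite -gsum_eq0 -leqn0.
by rewrite -(leq_add2r l) add0n -{1}gH -gsumU_disjoint // -gF gsumS.
Qed.

Lemma Mgamma_setU_zeroset H I : is_matroid M -> is_cover M l g ->
  H \in Mgamma M l g -> H \subset supp g ->
  I \in M -> I \subset ~: supp g -> I :|: H \in Mgamma M l g.
Proof.
move=> M_matroid cover /MgammaP[F [Fbasis gF sHF]] sHsupp IM zI.
have [J [Jbasis sIJ sJIF]] := basis_extend_within M_matroid Fbasis IM.
have gJ_le : gsum g J <= l by rewrite -gF -(gsumU_zero F zI) gsumS.
have gJ : gsum g J = l by apply/eqP; rewrite eqn_leq gJ_le cover.
apply/MgammaP; exists J; split=> //; rewrite subUset sIJ /=.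
apply/subsetP => h hH; apply/negPn/negP => hJ.
have sJIFh : J \subset I :|: F :\ h.
  apply/subsetP => x xJ; have xh : x != h by apply: contraNneq hJ => <-.
  by move/subsetP/(_ x xJ): sJIF; rewrite !inE xh.
have := gsumD1_lt (subsetP sHF h hH) (subsetP sHsupp h hH).
by rewrite gF -(gsumU_zero _ zI) ltnNge (leq_trans _ (gsumS _ sJIFh)) ?gJ.
Qed.

End GammaMinimalBases.

Theorem proposition3p9 (n : nat) (M : {set {set 'I_n}}) (l : nat)
    (g : 'I_n -> nat) (H : {set 'I_n}) :
  is_matroid M ->
  is_basic_cover M l g ->
  H \in Mgamma M l g ->
  H \subset supp g ->
  gsum g H = l ->
  contract (Mgamma M l g) H = restrict (Mgamma M l g) (~: supp g) /\
  ((forall i, g i <= 1) ->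
     restrict (Mgamma M l g) (~: supp g) = restrict M (~: supp g)).
Proof.
move=> M_matroid [cover _] HMg sHsupp gH.
have extend := Mgamma_setU_zeroset M_matroid cover HMg sHsupp.
split; [|move=> _]; apply/setP => I; rewrite ?in_contract !in_restrict.
  apply/andP/andP => [[sIH IHMg] | [IMg zI]]; split.
  - exact: Mgamma_downward IHMg (subsetUl I H).
  - by apply: zeroset_of_Mgamma_setU gH _ IHMg; rewrite disjoints_subset.
  - by apply: subset_trans zI _; rewrite setCS.
  - exact: extend (Mgamma_sub M_matroid IMg) zI.
apply/andP/andP => [[IMg zI] | [IM zI]]; split=> //.
  exact: Mgamma_sub M_matroid IMg.
exact: Mgamma_downward (extend I IM zI) (subsetUl I H).
Qed.
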